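(* Let $I$ be a set with a non-trivial ultrafilter $\mathcal U$, $n\in\mathbb{N}$, $r>0$, and for each $i\in I$ let $E_i$ be an order continuous Banach lattice with a weak unit and $M_i$ an $(n,r)$-dispersed closed subspace of $E_i$. Then $(M_i)_{\mathcal U}$ is an $(n,r)$-dispersed subspace of $(E_i)_{\mathcal U}$.
   Context: A Banach lattice is order continuous if every net decreasing in order to $0$ converges in norm to $0$; $e\ge0$ is a weak unit if $|x|\wedge e=0$ implies $x=0$. Ultraproducts: $(X_i)_{\mathcal U}=\ell_\infty(I,X_i)/\{(x_i):\lim_{\mathcal U}\|x_i\|=0\}$, a Banach lattice when the $X_i$ are, with $[(x_i)]\le[(y_i)]$ iff there is $(z_i)$ with $\lim_{\mathcal U}\|z_i\|=0$ and $x_i+z_i\le y_i$ for all $i$; $(M_i)_{\mathcal U}$ is identified with the closed subspace $\{[(x_i)]: x_i\in M_i\}$ of $(E_i)_{\mathcal U}$. A closed subspace $M$ of a Banach lattice $F$ is $(n,r)$-dispersed if for every pairwise disjoint family $x_1,\dots,x_n$ of norm-one vectors of $F$ there is $i\in\{1,\dots,n\}$ with $\mathrm{dist}(x_i,M)\ge r$. *)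

From HB Require Import structures.
From mathcomp Require Import all_boot all_order all_algebra.
From mathcomp Require Import all_classical all_reals all_analysis.
Set Implicit Arguments. Unset Strict Implicit. Unset Printing Implicit Defensive.
Import Order.TTheory GRing.Theory Num.Theory.
Import numFieldNormedType.Exports.
Local Open Scope classical_set_scope.
Local Open Scope ring_scope.

Section BanachLattice.
Variables (R : realType) (E : completeNormedModType R).
Variables (le : E -> E -> Prop) (join : E -> E -> E).

Definition lmeet (x y : E) : E := - join (- x) (- y).
Definition labs (x : E) : E := join x (- x).

Definition is_banach_lattice : Prop :=
  (forall x, le x x) /\
  (forall x y, le x y -> le y x -> x = y) /\
  (forall x y z, le x y -> le y z -> le x z) /\
  (forall x y z, le x y -> le (x + z) (y + z)) /\
  (forall (a : R) x y, 0 <= a -> le x y -> le (a *: x) (a *: y)) /\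
  (forall x y, [/\ le x (join x y), le y (join x y) &
                   forall z, le x z -> le y z -> le (join x y) z]) /\
  (forall x y, le (labs x) (labs y) -> `|x| <= `|y|).

Definition order_continuous : Prop :=
  forall (D : Type) (leD : D -> D -> Prop) (x : D -> E),
    (exists d : D, True) ->
    (forall d, leD d d) ->
    (forall d1 d2 d3, leD d1 d2 -> leD d2 d3 -> leD d1 d3) ->
    (forall d1 d2, exists d3, leD d1 d3 /\ leD d2 d3) ->
    (forall d1 d2, leD d1 d2 -> le (x d2) (x d1)) ->
    (forall d, le 0 (x d)) ->
    (forall z, (forall d, le z (x d)) -> le z 0) ->
    forall eps : R, 0 < eps -> exists d0, forall d, leD d0 d -> `|x d| < eps.

Definition has_weak_unit : Prop :=
  exists e : E, le 0 e /\ forall x, lmeet (labs x) e = 0 -> x = 0.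

Definition closed_subspace (M : set E) : Prop :=
  [/\ closed M, M 0,
      (forall x y, M x -> M y -> M (x + y)) &
      (forall (a : R) x, M x -> M (a *: x))].

(* (n,r)-dispersed closed subspace M (indices {1..n} rendered as 'I_n);
   dist(x, M) >= r  is  forall m in M, r <= |x - m| *)
Definition dispersed (n : nat) (r : R) (M : set E) : Prop :=
  forall x : 'I_n -> E,
    (forall k l, k != l -> lmeet (labs (x k)) (labs (x l)) = 0) ->
    (forall k, `|x k| = 1) ->
    exists k, forall m, M m -> r <= `|x k - m|.
End BanachLattice.

Section Ultra.
Variables (I : Type).

Definition ultrafilter_on (U : set (set I)) : Prop :=
  [/\ U setT, ~ U set0,
      (forall A B, U A -> U B -> U (A `&` B)),
      (forall A B, A `<=` B -> U A -> U B) &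
      (forall A, U A \/ U (~` A))].

Definition nontrivial_ultrafilter (U : set (set I)) : Prop :=
  ultrafilter_on U /\ forall i : I, ~ U [set i].

Definition Ulim (R : realType) (U : set (set I)) (f : I -> R) (l : R) : Prop :=
  forall eps : R, 0 < eps -> U [set i | `|f i - l| < eps].

Definition bounded_fam (R : realType) (E : I -> normedModType R)
  (x : forall i, E i) : Prop := exists C : R, forall i, `|x i| <= C.

(* Elements of the ultraproduct are
   represented by bounded families; the ultraproduct norm of [(x_i)] is
   lim_U |x_i|; [(x_i)] = 0 iff lim_U |x_i| = 0; lattice operations are
   computed coordinatewise; (M_i)_U = {[(m_i)] : m_i in M_i}. *)
Definition ultra_dispersed (R : realType) (U : set (set I))
  (E : I -> completeNormedModType R) (join : forall i, E i -> E i -> E i)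
  (M : forall i, set (E i)) (n : nat) (r : R) : Prop :=
  forall x : 'I_n -> forall i, E i,
    (forall k, bounded_fam (x k)) ->
    (forall k l, k != l ->
       Ulim U (fun i => `| lmeet (join i) (labs (join i) (x k i))
                                         (labs (join i) (x l i)) |) 0) ->
    (forall k, Ulim U (fun i => `|x k i|) 1) ->
    exists k, forall m : forall i, E i,
      bounded_fam m -> (forall i, M i (m i)) ->
      forall d : R, Ulim U (fun i => `|x k i - m i|) d -> r <= d.
End Ultra.

From HB Require Import structures.
From mathcomp Require Import all_boot all_order all_algebra.
From mathcomp Require Import all_classical all_reals all_analysis.
From mathcomp Require Import lra.
Import Order.TTheory GRing.Theory Num.Theory.
Import numFieldNormedType.Exports.
Local Open Scope classical_set_scope.
Local Open Scope ring_scope.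

(* Represent a disjoint normalised n-tuple of the ultraproduct by families
   (x_k^i)_i.  In each E_i the tuple is only almost disjoint, so replace it by
   the disjoint tuple y_k = (x_k^+ - W_k)^+ - (x_k^- - W_k)^+, with
   W_k = sum_(l != k) |x_l|; the Riesz decomposition inequality gives
   |x_k - y_k| <= 2 sum_(l != k) | |x_k| /\ |x_l| |, which tends to 0 along U.
   Dispersedness of M_i, applied to the y_k / |y_k|, yields for each i an index
   k_i with r |y_(k_i)| <= dist(y_(k_i), M_i).  There are finitely many
   indices, so a single k equals k_i for U-almost every i, and passing to the
   limit along U gives r <= |[x_k] - [m]| for every [m] in (M_i)_U. *)

Section BanachLatticeTheory.
Context {R : realType} {E : completeNormedModType R}.
Context {le : E -> E -> Prop} {join : E -> E -> E}.
Hypothesis bl : is_banach_lattice le join.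

Local Notation meet := (lmeet join).
Local Notation abs := (labs join).
Local Notation pos z := (join z 0).

Lemma bl_lexx x : le x x. Proof. by case: bl => h _; apply: h. Qed.
Lemma bl_le_anti {x y} : le x y -> le y x -> x = y.
Proof. by case: bl => _ [h _]; apply: h. Qed.
Lemma bl_le_trans {y x z} : le x y -> le y z -> le x z.
Proof. by case: bl => _ [_ [h _]]; apply: h. Qed.
Lemma bl_leDr z {x y} : le x y -> le (x + z) (y + z).
Proof. by case: bl => _ [_ [_ [h _]]]; apply: h. Qed.
Lemma bl_leZ {a : R} {x y} : 0 <= a -> le x y -> le (a *: x) (a *: y).
Proof. by case: bl => _ [_ [_ [_ [h _]]]]; apply: h. Qed.
Lemma bl_le_joinl x y : le x (join x y).
Proof. by case: bl => _ [_ [_ [_ [_ [/(_ x y) [] ? ? ? _]]]]]. Qed.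
Lemma bl_le_joinr x y : le y (join x y).
Proof. by case: bl => _ [_ [_ [_ [_ [/(_ x y) [] ? ? ? _]]]]]. Qed.
Lemma bl_join_le {x y z} : le x z -> le y z -> le (join x y) z.
Proof. by case: bl => _ [_ [_ [_ [_ [/(_ x y) [_ _ h] _]]]]]; apply: h. Qed.
Lemma bl_norm_le {x y} : le (abs x) (abs y) -> `|x| <= `|y|.
Proof. by case: bl => _ [_ [_ [_ [_ [_ h]]]]]; apply: h. Qed.

Lemma bl_leDl z {x y} : le x y -> le (z + x) (z + y).
Proof. by rewrite ![z + _]addrC; apply: bl_leDr. Qed.
Lemma bl_leD {a b c d} : le a b -> le c d -> le (a + c) (b + d).
Proof. by move=> ab cd; apply: (bl_le_trans (y := b + c)); [apply: bl_leDr|apply: bl_leDl]. Qed.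
Lemma bl_addr_ge0 {a b} : le 0 a -> le 0 b -> le 0 (a + b).
Proof. by move=> a0 b0; rewrite -(addr0 0); apply: bl_leD. Qed.
Lemma bl_leN {x y} : le x y -> le (- y) (- x).
Proof. by move=> /(bl_leDr (- x - y)); rewrite addrA subrr add0r addrC subrK. Qed.
Lemma bl_oppr_le0 {a} : le 0 a -> le (- a) 0.
Proof. by move=> /bl_leN; rewrite oppr0. Qed.
Lemma bl_oppr_le {a} : le 0 a -> le (- a) a.
Proof. by move=> a0; apply: bl_le_trans (bl_oppr_le0 a0) a0. Qed.
Lemma bl_subr_ge0 x y : le 0 (y - x) <-> le x y.
Proof.
split; first by move=> /(bl_leDr x); rewrite add0r subrK.
by move=> /(bl_leDr (- x)); rewrite subrr.
Qed.
Lemma bl_scaler_ge0 {a : R} {x} : 0 <= a -> le 0 x -> le 0 (a *: x).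
Proof. by move=> a0 /(bl_leZ a0); rewrite scaler0. Qed.

Lemma bl_joinC x y : join x y = join y x.
Proof.
by apply: bl_le_anti; apply: bl_join_le; first [apply: bl_le_joinl|apply: bl_le_joinr].
Qed.
Lemma bl_join_idl x y : le y x -> join x y = x.
Proof.
move=> yx; apply: bl_le_anti; last exact: bl_le_joinl.
by apply: bl_join_le => //; apply: bl_lexx.
Qed.
Lemma bl_join_le2 {x x' y y'} : le x x' -> le y y' -> le (join x y) (join x' y').
Proof.
move=> xx' yy'; apply: bl_join_le.
  by apply: bl_le_trans xx' (bl_le_joinl _ _).
by apply: bl_le_trans yy' (bl_le_joinr _ _).
Qed.
Lemma bl_joinDr z x y : join (x + z) (y + z) = join x y + z.
Proof.
apply: bl_le_anti.
  by apply: bl_join_le; apply: bl_leDr; [apply: bl_le_joinl|apply: bl_le_joinr].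
rewrite -(subrK z (join (x + z) (y + z))); apply: bl_leDr; apply: bl_join_le.
  by have := bl_leDr (- z) (bl_le_joinl (x + z) (y + z)); rewrite addrK.
by have := bl_leDr (- z) (bl_le_joinr (x + z) (y + z)); rewrite addrK.
Qed.
Lemma bl_joinZ (c : R) x y : 0 < c -> join (c *: x) (c *: y) = c *: join x y.
Proof.
move=> c0; have cK u : c *: (c^-1 *: u) = u by rewrite scalerA mulfV ?scale1r ?gt_eqF.
have Kc u : c^-1 *: (c *: u) = u by rewrite scalerA mulVf ?scale1r ?gt_eqF.
have c'0 : 0 <= c^-1 by rewrite invr_ge0 ltW.
apply: bl_le_anti.
  by apply: bl_join_le; apply: (bl_leZ (ltW c0)); [apply: bl_le_joinl|apply: bl_le_joinr].
rewrite -[X in le _ X]cK; apply: (bl_leZ (ltW c0)); apply: bl_join_le.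
  by rewrite -{1}[x]Kc; exact: bl_leZ c'0 (bl_le_joinl _ _).
by rewrite -{1}[y]Kc; exact: bl_leZ c'0 (bl_le_joinr _ _).
Qed.

Lemma bl_meet_lel x y : le (meet x y) x.
Proof. by have := bl_leN (bl_le_joinl (- x) (- y)); rewrite opprK. Qed.
Lemma bl_meet_ler x y : le (meet x y) y.
Proof. by have := bl_leN (bl_le_joinr (- x) (- y)); rewrite opprK. Qed.
Lemma bl_le_meet {x y z} : le z x -> le z y -> le z (meet x y).
Proof.
move=> zx zy; rewrite -[z]opprK; apply: bl_leN.
by apply: bl_join_le; apply: bl_leN.
Qed.
Lemma bl_meet_le2 {x x' y y'} : le x x' -> le y y' -> le (meet x y) (meet x' y').
Proof.
move=> xx' yy'; apply: bl_le_meet.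
  by apply: bl_le_trans (bl_meet_lel _ _) xx'.
by apply: bl_le_trans (bl_meet_ler _ _) yy'.
Qed.
Lemma bl_meetDr z x y : meet (x + z) (y + z) = meet x y + z.
Proof. by rewrite /lmeet !opprD bl_joinDr opprD opprK. Qed.
Lemma bl_meetZ (c : R) x y : 0 < c -> meet (c *: x) (c *: y) = c *: meet x y.
Proof. by move=> c0; rewrite /lmeet -!scalerN bl_joinZ // scalerN. Qed.
Lemma bl_meet_ge0 {a b} : le 0 a -> le 0 b -> le 0 (meet a b).
Proof. exact: bl_le_meet. Qed.

Lemma bl_meetE x y : meet x y = x + y - join x y.
Proof.
have := bl_joinDr (- (x + y)) y x.
have -> : y - (x + y) = - x by rewrite opprD addrCA subrr addr0.
have -> : x - (x + y) = - y by rewrite opprD addrA subrr add0r.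
by rewrite [join y x]bl_joinC /lmeet => ->; rewrite opprB.
Qed.

Lemma bl_posN z : pos (- z) = pos z - z.
Proof. by have := bl_joinDr (- z) 0 z; rewrite add0r subrr [join 0 z]bl_joinC. Qed.
Lemma bl_subr_pos u w : u - pos (u - w) = meet u w.
Proof.
have -> : join (u - w) 0 = join u w - w by rewrite -bl_joinDr subrr.
by rewrite bl_meetE opprB addrA.
Qed.
Lemma bl_meet_posN z : meet (pos z) (pos (- z)) = 0.
Proof.
rewrite bl_posN; have := bl_meetDr (pos z) 0 (- z).
rewrite add0r addrC => ->.
by rewrite /lmeet oppr0 opprK [join 0 z]bl_joinC addNr.
Qed.

Lemma bl_abs_ge0 x : le 0 (abs x).
Proof.
have x2 : le 0 (abs x + abs x).
  by rewrite -(subrr x); apply: bl_leD; [apply: bl_le_joinl|apply: bl_le_joinr].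
have := bl_scaler_ge0 (a := 2^-1) ltac:(by rewrite invr_ge0) x2.
by rewrite -mulr2n -[abs x *+ 2]scaler_nat scalerA mulVf ?scale1r ?pnatr_eq0.
Qed.
Lemma bl_abs_id a : le 0 a -> abs a = a.
Proof. by move=> a0; apply: bl_join_idl; apply: bl_oppr_le. Qed.
Lemma bl_pos_le_abs x : le (pos x) (abs x).
Proof. by apply: bl_join_le; [apply: bl_le_joinl|apply: bl_abs_ge0]. Qed.
Lemma bl_posN_le_abs x : le (pos (- x)) (abs x).
Proof. by apply: bl_join_le; [apply: bl_le_joinr|apply: bl_abs_ge0]. Qed.
Lemma bl_abs_subr_le {p q} : le 0 p -> le 0 q -> le (abs (p - q)) (p + q).
Proof.
move=> p0 q0; apply: bl_join_le; first exact: bl_leDl (bl_oppr_le q0).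
by rewrite opprB addrC; apply: bl_leDr (bl_oppr_le p0).
Qed.
Lemma bl_absZ (c : R) x : 0 <= c -> abs (c *: x) = c *: abs x.
Proof.
rewrite le_eqVlt => /predU1P [<-|c0]; last by rewrite /labs -scalerN bl_joinZ.
by rewrite !scale0r bl_abs_id //; apply: bl_lexx.
Qed.
Lemma bl_norm_le_pos z b : le 0 b -> le (abs z) b -> `|z| <= `|b|.
Proof. by move=> b0 zb; apply: bl_norm_le; rewrite [abs b]bl_abs_id. Qed.

Lemma bl_leZl {a b : R} {x} : le 0 x -> a <= b -> le (a *: x) (b *: x).
Proof.
by move=> x0 ab; apply/bl_subr_ge0; rewrite -scalerBl; apply: bl_scaler_ge0; rewrite ?subr_ge0.
Qed.

Lemma bl_meetDr_le a b c : le 0 a -> le 0 b -> le 0 c ->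
  le (meet a (b + c)) (meet a b + meet a c).
Proof.
move=> a0 b0 c0; set t := meet a (b + c).
rewrite -(subrK (meet a b) t) addrC; apply: bl_leDl.
have -> : t - meet a b = join (- a + t) (- b + t) by rewrite bl_joinDr /lmeet opprK addrC.
apply: bl_join_le.
  apply: (bl_le_trans (y := 0)); last exact: bl_meet_ge0.
  by rewrite -(addNr a); apply: bl_leDl; apply: bl_meet_lel.
apply: bl_le_meet.
  apply: (bl_le_trans (y := t)); last exact: bl_meet_lel.
  by rewrite -{2}[t]add0r; apply: bl_leDr (bl_oppr_le0 b0).
by rewrite -(addKr b c); apply: bl_leDl; apply: bl_meet_ler.
Qed.

Lemma bl_sum_ge0 (T : Type) (s : seq T) (P : pred T) (F : T -> E) :
  (forall l, P l -> le 0 (F l)) -> le 0 (\sum_(l <- s | P l) F l).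
Proof.
move=> F0; apply: big_rec => [|l y Pl y0]; first exact: bl_lexx.
by apply: bl_addr_ge0 => //; apply: F0.
Qed.

Lemma bl_meet_sum_le (T : Type) (s : seq T) (P : pred T) (F : T -> E) a :
  le 0 a -> (forall l, P l -> le 0 (F l)) ->
  le (meet a (\sum_(l <- s | P l) F l)) (\sum_(l <- s | P l) meet a (F l)).
Proof.
move=> a0 F0; elim: s => [|l s IH]; first by rewrite !big_nil; apply: bl_meet_ler.
rewrite !big_cons; case: ifP => Pl //.
apply: (bl_le_trans (y := meet a (F l) + meet a (\sum_(j <- s | P j) F j))).
  by apply: bl_meetDr_le => //; [apply: F0 | apply: bl_sum_ge0].
exact: bl_leDl.
Qed.

Lemma bl_meet_eq0_le (s : R) a b P Q : 0 < s -> le 0 a -> le 0 b ->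
  le a (s *: P) -> le b (s *: Q) -> meet P Q = 0 -> meet a b = 0.
Proof.
move=> s0 a0 b0 aP bQ PQ; apply: bl_le_anti; last exact: bl_meet_ge0.
have <- : s *: meet P Q = 0 by rewrite PQ scaler0.
by rewrite -bl_meetZ //; apply: bl_meet_le2.
Qed.

Lemma bl_disjointZ a b (c c' : R) : meet (abs a) (abs b) = 0 -> 0 <= c -> 0 <= c' ->
  meet (abs (c *: a)) (abs (c' *: b)) = 0.
Proof.
move=> ab c0 c'0; apply: (@bl_meet_eq0_le (c + c' + 1) _ _ (abs a) (abs b)) ab; first lra.
- by rewrite bl_absZ //; apply: bl_scaler_ge0 (bl_abs_ge0 _).
- by rewrite bl_absZ //; apply: bl_scaler_ge0 (bl_abs_ge0 _).
- by rewrite bl_absZ //; apply: bl_leZl (bl_abs_ge0 _) _; lra.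
- by rewrite bl_absZ //; apply: bl_leZl (bl_abs_ge0 _) _; lra.
Qed.

Section Disjointify.
Context {n : nat} (x : 'I_n -> E).

Definition abs_others k := \sum_(l | l != k) abs (x l).

Definition disjointify k :=
  pos (pos (x k) - abs_others k) - pos (pos (- x k) - abs_others k).

Lemma abs_others_ge0 k : le 0 (abs_others k).
Proof. by apply: bl_sum_ge0 => l _; apply: bl_abs_ge0. Qed.

Lemma abs_le_others k l : l != k -> le (abs (x l)) (abs_others k).
Proof.
move=> lk; rewrite /abs_others (bigD1 l) //= -{1}[abs (x l)]addr0.
by apply: bl_leDl; apply: bl_sum_ge0 => j _; apply: bl_abs_ge0.
Qed.

Lemma abs_disjointify_le k l : l != k ->
  le (abs (disjointify k)) (2 *: pos (abs (x k) - abs (x l))).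
Proof.
move=> lk; set P := pos (abs (x k) - abs (x l)).
have partP u : le u (abs (x k)) -> le (pos (u - abs_others k)) P.
  move=> uk; apply: bl_join_le2 (bl_lexx 0).
  by apply: bl_leD uk _; apply: bl_leN; apply: abs_le_others.
apply: (bl_le_trans (y := P + P)); last first.
  by rewrite -mulr2n -[P *+ 2]scaler_nat; apply: bl_lexx.
rewrite /disjointify.
apply: (bl_le_trans (bl_abs_subr_le (bl_le_joinr _ _) (bl_le_joinr _ _))).
by apply: bl_leD; apply: partP; [apply: bl_pos_le_abs|apply: bl_posN_le_abs].
Qed.

Lemma disjointify_disjoint k l : k != l ->
  meet (abs (disjointify k)) (abs (disjointify l)) = 0.
Proof.
move=> kl; apply: (@bl_meet_eq0_le 2 _ _ (pos (abs (x k) - abs (x l)))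
  (pos (abs (x l) - abs (x k))) _ (bl_abs_ge0 _) (bl_abs_ge0 _)).
- by rewrite ltr0n.
- by apply: abs_disjointify_le; rewrite eq_sym.
- exact: abs_disjointify_le.
by rewrite -[abs (x l) - abs (x k)]opprB bl_meet_posN.
Qed.

Lemma norm_sub_disjointify k :
  `|x k - disjointify k| <= 2 * \sum_(l | l != k) `|meet (abs (x k)) (abs (x l))|.
Proof.
set S := \sum_(l | l != k) meet (abs (x k)) (abs (x l)).
have S0 : le 0 S by apply: bl_sum_ge0 => l _; apply: bl_meet_ge0; apply: bl_abs_ge0.
have meetS : le (meet (abs (x k)) (abs_others k)) S.
  by apply: bl_meet_sum_le => [|l _]; apply: bl_abs_ge0.
have partS u : le u (abs (x k)) -> le (meet u (abs_others k)) S.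
  by move=> uk; apply: bl_le_trans meetS; apply: bl_meet_le2 uk (bl_lexx _).
have part0 u : le 0 u -> le 0 (meet u (abs_others k)).
  by move=> u0; apply: bl_meet_ge0 u0 (abs_others_ge0 k).
have -> : x k - disjointify k =
    meet (pos (x k)) (abs_others k) - meet (pos (- x k)) (abs_others k).
  have {1}-> : x k = pos (x k) - pos (- x k) by rewrite bl_posN opprB addrC subrK.
  rewrite -!bl_subr_pos /disjointify !opprB addrACA [RHS]addrACA.
  by rewrite [- pos (- x k) + _]addrC.
apply: (le_trans (y := `|S + S|)).
  apply: bl_norm_le_pos; first exact: bl_addr_ge0.
  apply: bl_le_trans (bl_abs_subr_le (part0 _ (bl_le_joinr _ _)) (part0 _ (bl_le_joinr _ _))) _.
  by apply: bl_leD; apply: partS; [apply: bl_pos_le_abs|apply: bl_posN_le_abs].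
apply: (le_trans (ler_normD S S)); rewrite -mulr2n -[`|S| *+ 2]mulr_natl ler_wpM2l //.
exact: ler_norm_sum.
Qed.

End Disjointify.

Lemma dispersed_disjoint n (r : R) (M : set E) (y : 'I_n -> E) :
  dispersed join n r M -> (forall (a : R) m, M m -> M (a *: m)) ->
  (forall k l, k != l -> meet (abs (y k)) (abs (y l)) = 0) -> (forall k, y k != 0) ->
  exists k, forall m, M m -> r * `|y k| <= `|y k - m|.
Proof.
move=> disp MZ ydisj y0.
have zdisj k l : k != l -> meet (abs (`|y k|^-1 *: y k)) (abs (`|y l|^-1 *: y l)) = 0.
  by move=> kl; apply: bl_disjointZ; rewrite ?invr_ge0 //; apply: ydisj.
have znorm k : `| `|y k|^-1 *: y k| = 1.
  by rewrite normrZ ger0_norm ?invr_ge0 // mulVf // normr_eq0.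
have [k far] := disp _ zdisj znorm.
exists k => m /(MZ `|y k|^-1) /far.
by rewrite -scalerBr normrZ ger0_norm ?invr_ge0 // ler_pdivlMl ?normr_gt0 // mulrC.
Qed.

End BanachLatticeTheory.

Arguments disjointify {R E} join {n} x k.

Lemma ler_norm_perturb (R : numDomainType) (V : normedModType R) (r : R) (a b c : V) :
  0 <= r -> r * `|b| <= `|b - c| -> r * (`|a| - `|a - b|) <= `|a - c| + `|a - b|.
Proof.
move=> r0 rb; have ab : `|a| - `|a - b| <= `|b|.
  by rewrite lerBlDr -{1}(subrK b a) addrC ler_normD.
apply: le_trans (ler_wpM2l r0 ab) (le_trans rb _).
have -> : b - c = (a - c) - (a - b) by rewrite opprB [RHS]addrC addrA subrK.
exact: ler_normB.
Qed.

Section Ultrafilter.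
Context {T : Type} {F : set_system T}.

Lemma ultrafilter_on_proper : ultrafilter_on F -> ProperFilter F.
Proof. by case=> FT F0 FI FS _; constructor => //; constructor. Qed.

Lemma near_ultra_fin_choice {FF : ProperFilter F} (K : finType) (P : T -> K -> Prop) :
  (forall A, F A \/ F (~` A)) ->
  (\forall t \near F, exists k, P t k) -> exists k, \forall t \near F, P t k.
Proof.
move=> ultra FP; apply: contrapT => noK.
have FnotP k : \forall t \near F, ~ P t k.
  by case: (ultra [set t | P t k]) => // FPk; case: noK; exists k.
have [t [[k Ptk] nP]] := filter_ex (filterI FP (filter_forall FF FnotP)).
exact: nP k Ptk.
Qed.

Lemma UlimP {FF : Filter F} (R : realType) (f : T -> R) l : Ulim F f l <-> f @ F --> l.
Proof. by rewrite cvgrPdistC_lt. Qed.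

End Ultrafilter.

Section UltraDisjointify.
Context {R : realType} {I : Type} {U : set_system I} {UF : Filter U}.
Context {E : I -> completeNormedModType R}.
Context {le : forall i, E i -> E i -> Prop} {join : forall i, E i -> E i -> E i}.
Hypothesis bl : forall i, is_banach_lattice (le i) (join i).
Context {n : nat} {x : 'I_n -> forall i, E i}.
Hypothesis x_disj : forall k l, k != l ->
  Ulim U (fun i => `|lmeet (join i) (labs (join i) (x k i)) (labs (join i) (x l i))|) 0.
Hypothesis x_norm : forall k, Ulim U (fun i => `|x k i|) 1.

Local Notation y i := (disjointify (join i) (fun l => x l i)).

Lemma cvg_norm_sub_disjointify k : (fun i => `|x k i - y i k|) @ U --> 0.
Proof.
apply: (@squeeze_cvgr _ _ _ _ (fun=> 0)
  (fun i => 2 * \sum_(l | l != k)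
     `|lmeet (join i) (labs (join i) (x k i)) (labs (join i) (x l i))|)).
- by near=> i; rewrite normr_ge0 /=; apply: norm_sub_disjointify.
- exact: cvg_cst.
suff : (fun i => 2 * \sum_(l | l != k)
     `|lmeet (join i) (labs (join i) (x k i)) (labs (join i) (x l i))|) @ U -->
     2 * \sum_(l | l != k) (0 : R) by rewrite big1_eq mulr0.
apply: cvgMl_tmp; apply: cvg_big => [|l lk]; first exact: add_continuous.
by apply/UlimP; apply: x_disj; rewrite eq_sym.
Unshelve. all: by end_near.
Qed.

Lemma near_disjointify_neq0 : \forall i \near U, forall k, y i k != 0.
Proof.
apply: filter_forall => k.
have lim1 : (fun i => `|x k i| - `|x k i - y i k|) @ U --> (1 - 0 : R).
  by apply: cvgB; [apply/UlimP | apply: cvg_norm_sub_disjointify].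
have : \forall i \near U, 0 < `|x k i| - `|x k i - y i k|.
  by apply: (cvgr_gt _ lim1); rewrite subr0 ltr01.
by apply: filterS => i; apply: contraTneq => ->; rewrite subr0 subrr ltxx.
Qed.

End UltraDisjointify.

Theorem proposition5p9 (R : realType) (I : Type) (U : set (set I)) (n : nat)
  (r : R) (E : I -> completeNormedModType R)
  (le : forall i, E i -> E i -> Prop) (join : forall i, E i -> E i -> E i)
  (M : forall i, set (E i)) :
  nontrivial_ultrafilter U -> 0 < r ->
  (forall i, is_banach_lattice (le i) (join i)) ->
  (forall i, order_continuous (le i)) ->
  (forall i, has_weak_unit (le i) (join i)) ->
  (forall i, closed_subspace (M i)) ->
  (forall i, dispersed (join i) n r (M i)) ->
  ultra_dispersed U join M n r.
Proof.
move=> [Uultra _] r_gt0 bl _ _ Msub disp x _ x_disj x_norm.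
change (set_system I) in U; have UF := ultrafilter_on_proper Uultra.
pose y i := disjointify (join i) (fun l => x l i).
have [k far] : exists k, \forall i \near U,
    forall m, M i m -> r * `|y i k| <= `|y i k - m|.
  apply: near_ultra_fin_choice; first by case: Uultra.
  near=> i; apply: dispersed_disjoint (disp i) _ _ _ => //.
  - by move=> a m; case: (Msub i) => _ _ _; apply.
  - by move=> k l; apply: disjointify_disjoint.
  - by near: i; apply: near_disjointify_neq0.
exists k => m _ Mm d /UlimP xm.
have lim : (fun i => `|x k i - m i| + `|x k i - y i k|
             - r * (`|x k i| - `|x k i - y i k|)) @ U --> d + 0 - r * (1 - 0).
  have xy : (fun i => `|x k i - y i k|) @ U --> 0.
    exact: cvg_norm_sub_disjointify.
  apply: cvgB; first exact: cvgD.
  by apply: cvgMl_tmp; apply: cvgB xy; apply/UlimP.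
suff : 0 <= d + 0 - r * (1 - 0) by rewrite addr0 subr0 mulr1 subr_ge0.
apply: (cvgr_to_ge lim); near=> i; rewrite subr_ge0.
by apply: ler_norm_perturb; [apply: ltW | apply: (near far i)].
Unshelve. all: by end_near.
Qed.
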